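(* There exist absolute constants $0<c<C$ such that for every odd $n\ge3$ and every $\alpha>0$, the function $hs_\alpha(x)=\min\big(\alpha,\frac{2\alpha}{n}\sum_{i=1}^nx_i\big)$ on $\{0,1\}^n$ satisfies $$c\,\frac{\alpha^2}{n}\le\|hs_\alpha\|_2^2-\widehat{hs_\alpha}(\emptyset)^2-\widehat{hs_\alpha}([n])^2\le C\,\frac{\alpha^2}{n}.$$
   Context: Fourier analysis: for $S\subseteq[n]$ let $\chi_S(x)=(-1)^{\sum_{i\in S}x_i}$ and $\hat f(S)=\mathbb E_{x\sim U(\{0,1\}^n)}[f(x)\chi_S(x)]$; $\|f\|_2^2=\mathbb E_x[f(x)^2]=\sum_S\hat f(S)^2$. *)

(* Boolean cube {0,1}^n = {ffun 'I_n -> bool}; real values in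
   an arbitrary realFieldType R (for R = the reals this is the paper's setting). *)
From HB Require Import structures.
From mathcomp Require Import all_boot all_order all_algebra.
Set Implicit Arguments. Unset Strict Implicit. Unset Printing Implicit Defensive.
Import Order.TTheory GRing.Theory Num.Theory.
Local Open Scope ring_scope.

Notation cube n := {ffun 'I_n -> bool}.

Definition chi (R : ringType) (n : nat) (S : {set 'I_n}) (x : cube n) : R :=
  (-1) ^+ (\sum_(i in S) (x i : nat))%N.

Definition expect (R : fieldType) (n : nat) (g : cube n -> R) : R :=
  (2 ^+ n)^-1 * \sum_(x : cube n) g x.

Definition fhat (R : fieldType) (n : nat) (f : cube n -> R) (S : {set 'I_n}) : R :=
  expect (fun x => f x * chi R S x).

Definition norm2sq (R : fieldType) (n : nat) (f : cube n -> R) : R :=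
  expect (fun x => f x ^+ 2).

Definition hs (R : realFieldType) (n : nat) (alpha : R) (x : cube n) : R :=
  Num.min alpha (2 * alpha / n%:R * \sum_(i < n) (x i : nat)%:R).
Arguments hs {R} n alpha x.

(* Write hs_alpha = alpha - (alpha/n) u with u = negpart = max(0, -psi), where
   psi(x) = sum_i (-1)^(1 - x_i) is the centred spin sum, and let
   Q(f) = ||f||^2 - fhat(0)^2 - fhat([n])^2 be the weight of f outside the
   two extreme levels.  Since u^2(x) + u^2(complement x) = psi(x)^2 and
   E[psi^2] = n, we get E[u^2] = n/2.
   - Lower bound: psi is orthogonal to 1 and to chi_[n], so by Cauchy-Schwarz
     <hs, psi>^2 <= E[psi^2] Q(hs); and <hs, psi> = (alpha/n) E[u^2] = alpha/2
     because u psi = -u^2.  Hence Q(hs) >= alpha^2/(4n).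
   - Upper bound: Q(hs) <= Var(hs) <= E[(hs - alpha)^2] = (alpha/n)^2 E[u^2]
     = alpha^2/(2n). *)
From HB Require Import structures.
From mathcomp Require Import all_boot all_order all_algebra ring.
Import Order.TTheory GRing.Theory Num.Theory.
Local Open Scope ring_scope.
Set Implicit Arguments. Unset Strict Implicit.

Section Expectation.
Variables (R : numFieldType) (n : nat).
Local Notation E := (@expect R n).

Lemma eq_expect (f g : cube n -> R) : (forall x, f x = g x) -> E f = E g.
Proof. by move=> fg; rewrite /expect; congr (_ * _); apply: eq_bigr. Qed.

Lemma expectD (f g : cube n -> R) : E (fun x => f x + g x) = E f + E g.
Proof. by rewrite /expect big_split mulrDr. Qed.

Lemma expectZ (c : R) (f : cube n -> R) : E (fun x => c * f x) = c * E f.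
Proof. by rewrite /expect -mulr_sumr mulrCA. Qed.

Lemma expect_sum (F : 'I_n -> cube n -> R) :
  E (fun x => \sum_i F i x) = \sum_i E (F i).
Proof. by rewrite /expect exchange_big mulr_sumr. Qed.

(* The cube has 2^n points, which is invertible in characteristic 0. *)
Lemma expect_cst (c : R) : E (fun _ => c) = c.
Proof.
rewrite /expect sumr_const card_ffun card_bool card_ord.
by rewrite -[c *+ _]mulr_natl natrX mulrA mulVf ?mul1r // gt_eqF ?exprn_gt0.
Qed.

Lemma expect_ge0 (f : cube n -> R) : (forall x, 0 <= f x) -> 0 <= E f.
Proof. by move=> f0; rewrite mulr_ge0 ?sumr_ge0 ?invr_ge0 ?exprn_ge0. Qed.

Lemma expect_reindex (h : cube n -> cube n) (f : cube n -> R) :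
  injective h -> E (fun x => f (h x)) = E f.
Proof. by move=> inj_h; rewrite /expect [in RHS](reindex_inj inj_h). Qed.

Lemma expect_odd (h : cube n -> cube n) (f : cube n -> R) :
  injective h -> (forall x, f (h x) = - f x) -> E f = 0.
Proof.
move=> inj_h f_odd; have Ef : E f = - E f.
  rewrite -{1}(expect_reindex f inj_h) -mulN1r -expectZ.
  by apply: eq_expect => x; rewrite f_odd mulN1r.
have : E f *+ 2 = 0 by rewrite mulr2n {1}Ef addNr.
by move/eqP; rewrite mulrn_eq0 => /eqP.
Qed.

End Expectation.

Section Variance.
Variables (R : realFieldType) (n : nat).
Local Notation E := (@expect R n).

Lemma cauchy_schwarz (h p : cube n -> R) : 0 < E (fun x => p x ^+ 2) ->
  E (fun x => h x * p x) ^+ 2 <= E (fun x => p x ^+ 2) * E (fun x => h x ^+ 2).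
Proof.
move=> v_gt0; set v := E (fun x => p x ^+ 2) in v_gt0 *.
set w := E (fun x => h x * p x).
have : 0 <= E (fun x => (v * h x - w * p x) ^+ 2).
  by apply: expect_ge0 => x; apply: sqr_ge0.
rewrite (eq_expect (g := fun x => v ^+ 2 * h x ^+ 2
   + ((- 2 * v * w) * (h x * p x) + w ^+ 2 * p x ^+ 2))); last by move=> x; ring.
rewrite !expectD !expectZ -/v -/w => ge0.
have : 0 <= v * (v * E (fun x => h x ^+ 2) - w ^+ 2).
  by move: ge0; congr (0 <= _); ring.
by rewrite pmulr_rge0 // subr_ge0.
Qed.

(* The weight of g outside the constant function and a normalized function c
   orthogonal to constants. *)
Definition residual (c g : cube n -> R) : R :=
  E (fun x => g x ^+ 2) - E g ^+ 2 - E (fun x => g x * c x) ^+ 2.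

(* Lower bound: projecting g onto a function p orthogonal to 1 and c. *)
Lemma residual_ge (c g p : cube n -> R) :
  E c = 0 -> E (fun x => c x ^+ 2) = 1 -> E p = 0 ->
  E (fun x => p x * c x) = 0 -> 0 < E (fun x => p x ^+ 2) ->
  E (fun x => g x * p x) ^+ 2 <= E (fun x => p x ^+ 2) * residual c g.
Proof.
move=> Ec Ec2 Ep Epc p_gt0; set a := E g; set b := E (fun x => g x * c x).
pose h x := g x - a - b * c x.
have -> : residual c g = E (fun x => h x ^+ 2).
  rewrite (eq_expect (g := fun x => g x ^+ 2 + (a ^+ 2 * 1 + (b ^+ 2 * c x ^+ 2
      + ((- 2 * a) * g x + ((- 2 * b) * (g x * c x) + (2 * a * b) * c x))))));
    last by move=> x; rewrite /h; ring.
  by rewrite /residual !expectD !expectZ expect_cst Ec Ec2 -/a -/b; ring.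
have -> : E (fun x => g x * p x) = E (fun x => h x * p x).
  rewrite [RHS](eq_expect (g := fun x => g x * p x + ((- a) * p x + (- b) * (p x * c x))));
    last by move=> x; rewrite /h; ring.
  by rewrite !expectD !expectZ Ep Epc; ring.
exact: cauchy_schwarz.
Qed.

Lemma residual_le (c g : cube n -> R) (t : R) :
  residual c g <= E (fun x => (g x - t) ^+ 2).
Proof.
rewrite (eq_expect (g := fun x => g x ^+ 2 + ((- 2 * t) * g x + t ^+ 2))); last first.
  by move=> x; ring.
rewrite /residual !expectD expectZ expect_cst.
set q := E (fun x => g x ^+ 2); set m := E g; set b := E (fun x => g x * c x).
have -> : q + (-2 * t * m + t ^+ 2) = q - m ^+ 2 - b ^+ 2 + ((m - t) ^+ 2 + b ^+ 2).
  by ring.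
by rewrite lerDl addr_ge0 ?sqr_ge0.
Qed.

End Variance.

Section Cube.
Variable n : nat.

Definition flip (j : 'I_n) (x : cube n) : cube n :=
  [ffun i => if i == j then ~~ x i else x i].
Definition compl (x : cube n) : cube n := [ffun i => ~~ x i].

Lemma flipK (j : 'I_n) : involutive (flip j).
Proof. by move=> x; apply/ffunP => i; rewrite !ffunE; case: (i == j); rewrite ?negbK. Qed.

Lemma complK : involutive compl.
Proof. by move=> x; apply/ffunP => i; rewrite !ffunE negbK. Qed.

Lemma exists_other (i : 'I_n) : (1 < n)%N -> exists j : 'I_n, j != i.
Proof.
move=> n_gt1; pose j0 : 'I_n := Ordinal (ltnW n_gt1).
have [->|ne] := eqVneq i j0; last by exists j0; rewrite eq_sym.
by exists (Ordinal n_gt1).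
Qed.

Variable R : numFieldType.

Definition spin (i : 'I_n) (x : cube n) : R := if x i then 1 else -1.
Definition parity (x : cube n) : R := chi R setT x.
Definition psi (x : cube n) : R := \sum_i spin i x.

Lemma spin_flip (i j : 'I_n) (x : cube n) :
  spin i (flip j x) = if i == j then - spin i x else spin i x.
Proof. by rewrite /spin ffunE; case: (i == j); case: (x i); rewrite ?opprK. Qed.

Lemma spin_sq (i : 'I_n) (x : cube n) : spin i x ^+ 2 = 1.
Proof. by rewrite /spin; case: (x i); rewrite ?sqrrN expr1n. Qed.

Lemma parity_flip (j : 'I_n) (x : cube n) : parity (flip j x) = - parity x.
Proof.
rewrite /parity /chi (bigD1 j) ?inE //= [in RHS](bigD1 j) ?inE //= !exprD ffunE eqxx.
rewrite (eq_bigr (fun i => (x i : nat))); last first.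
  by move=> i /andP[_ /negbTE ne]; rewrite ffunE ne.
by case: (x j); rewrite /= ?expr0 ?expr1 ?mulN1r ?mul1r ?opprK.
Qed.

Lemma parity_sq (x : cube n) : parity x ^+ 2 = 1.
Proof. by rewrite /parity /chi -exprM mulnC exprM sqrrN !expr1n. Qed.

Lemma psi_compl (x : cube n) : psi (compl x) = - psi x.
Proof.
rewrite /psi -sumrN; apply: eq_bigr => i _.
by rewrite /spin ffunE; case: (x i); rewrite ?opprK.
Qed.

Local Notation E := (@expect R n).

Lemma expect_parity : (0 < n)%N -> E parity = 0.
Proof.
move=> n_gt0; apply: (expect_odd (can_inj (flipK (Ordinal n_gt0)))) => x.
exact: parity_flip.
Qed.

Lemma expect_parity_sq : E (fun x => parity x ^+ 2) = 1.
Proof. by rewrite (eq_expect (g := fun=> 1)) ?expect_cst // => x; rewrite parity_sq. Qed.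

Lemma expect_psi : E psi = 0.
Proof. by apply: (expect_odd (can_inj complK)) => x; rewrite psi_compl. Qed.

(* Each spin is killed by flipping another coordinate, while the parity is
   odd under it; this needs a second coordinate. *)
Lemma expect_psi_parity : (1 < n)%N -> E (fun x => psi x * parity x) = 0.
Proof.
move=> n_gt1; rewrite (eq_expect (g := fun x => \sum_i spin i x * parity x)); last first.
  by move=> x; rewrite /psi mulr_suml.
rewrite expect_sum big1 // => i _; have [j ne_ji] := exists_other i n_gt1.
apply: (expect_odd (can_inj (flipK j))) => x.
by rewrite parity_flip spin_flip eq_sym (negbTE ne_ji) mulrN.
Qed.

(* Spins are orthonormal, so E[psi^2] = n. *)
Lemma expect_psi_sq : E (fun x => psi x ^+ 2) = n%:R.
Proof.
rewrite (eq_expect (g := fun x => \sum_i \sum_j spin i x * spin j x)); last first.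
  by move=> x; rewrite /psi expr2 mulr_suml; apply: eq_bigr => i _; rewrite mulr_sumr.
rewrite expect_sum -[n in n%:R]card_ord -sumr_const; apply: eq_bigr => i _.
rewrite expect_sum (bigD1 i) //= big1 ?addr0.
  by rewrite (eq_expect (g := fun=> 1)) ?expect_cst // => x; rewrite -expr2 spin_sq.
move=> j ne_ji; apply: (expect_odd (can_inj (flipK j))) => x.
by rewrite !spin_flip eqxx eq_sym (negbTE ne_ji) mulrN.
Qed.

End Cube.

Section HalfSlope.
Variables (R : realFieldType) (n : nat).
Local Notation E := (@expect R n).

(* The negative part of psi: hs_alpha decreases from alpha linearly in it. *)
Definition negpart (x : cube n) : R := Num.max 0 (- psi R x).

Lemma negpart_psi (x : cube n) : negpart x * psi R x = - negpart x ^+ 2.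
Proof.
rewrite /negpart; have [psi_ge0|psi_lt0] := leP 0 (psi R x).
  by rewrite max_l ?oppr_le0 // mul0r expr0n oppr0.
by rewrite max_r ?oppr_ge0 ?ltW //; ring.
Qed.

Lemma negpart_compl (x : cube n) :
  negpart x ^+ 2 + negpart (compl x) ^+ 2 = psi R x ^+ 2.
Proof.
rewrite /negpart psi_compl opprK; have [psi_ge0|psi_lt0] := leP 0 (psi R x).
  by rewrite max_l ?oppr_le0 // expr0n add0r.
by rewrite max_r ?oppr_ge0 ?ltW // expr0n addr0 sqrrN.
Qed.

(* By the complement symmetry, E[negpart^2] is half of E[psi^2] = n. *)
Lemma expect_negpart_sq : E (fun x => negpart x ^+ 2) = n%:R / 2.
Proof.
have := expect_psi_sq n R.
rewrite (eq_expect (g := fun x => negpart x ^+ 2 + negpart (compl x) ^+ 2));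
  last by move=> x; rewrite negpart_compl.
rewrite expectD (expect_reindex (fun x => negpart x ^+ 2) (can_inj (@complK n))).
by move=> <-; field.
Qed.

Lemma psi_count (x : cube n) : psi R x = 2 * \sum_i (x i : nat)%:R - n%:R.
Proof.
rewrite /psi mulr_sumr -[in n%:R](card_ord n) -sumr_const -sumrB.
by apply: eq_bigr => i _; rewrite /spin; case: (x i) => /=; ring.
Qed.

Lemma hs_negpart (alpha : R) (x : cube n) : (0 < n)%N -> 0 < alpha ->
  hs n alpha x = alpha - alpha / n%:R * negpart x.
Proof.
move=> n_gt0 alpha_gt0; have n_neq0 : n%:R != 0 :> R by rewrite pnatr_eq0 -lt0n.
have k_gt0 : 0 < alpha / n%:R by rewrite divr_gt0 ?ltr0n.
rewrite /hs (_ : 2 * alpha / n%:R * _ = alpha + alpha / n%:R * psi R x);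
  last by rewrite psi_count; field.
rewrite /negpart; have [psi_ge0|psi_lt0] := leP 0 (psi R x).
  by rewrite max_l ?oppr_le0 // mulr0 subr0 min_l // lerDl mulr_ge0 // ltW.
rewrite max_r ?oppr_ge0 ?ltW // min_r; first by ring.
by rewrite gerDl pmulr_rle0 // ltW.
Qed.

Lemma hs_psi (alpha : R) : (0 < n)%N -> 0 < alpha ->
  E (fun x => hs n alpha x * psi R x) = alpha / 2.
Proof.
move=> n_gt0 alpha_gt0; have n_neq0 : n%:R != 0 :> R by rewrite pnatr_eq0 -lt0n.
rewrite (eq_expect (g := fun x => alpha * psi R x + alpha / n%:R * negpart x ^+ 2)).
  by rewrite expectD !expectZ expect_psi expect_negpart_sq; field.
move=> x; rewrite hs_negpart // mulrBl -(mulrA (alpha / n%:R)) negpart_psi; ring.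
Qed.

Lemma outer_weight_residual (f : cube n -> R) :
  norm2sq f - fhat f set0 ^+ 2 - fhat f setT ^+ 2 = residual (parity R) f.
Proof.
congr (_ - _ ^+ 2 - _); apply: eq_expect => x.
by rewrite /chi big_set0 expr0 mulr1.
Qed.

(* Lower bound: project hs onto psi, which has E[psi^2] = n and correlation
   alpha/2 with hs. *)
Lemma residual_hs_ge (alpha : R) : (1 < n)%N -> 0 < alpha ->
  1 / 4 * (alpha ^+ 2 / n%:R) <= residual (parity R) (hs n alpha).
Proof.
move=> n_gt1 alpha_gt0; have n_gt0 := ltnW n_gt1.
have n_pos : 0 < n%:R :> R by rewrite ltr0n.
have := residual_ge (hs n alpha) (expect_parity R n_gt0) (expect_parity_sq n R)
  (expect_psi n R) (expect_psi_parity R n_gt1).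
rewrite expect_psi_sq hs_psi // => /(_ n_pos) projection.
have -> : 1 / 4 * (alpha ^+ 2 / n%:R) = (alpha / 2) ^+ 2 / n%:R by field; rewrite gt_eqF.
rewrite ler_pdivrMr // [_ * n%:R]mulrC; exact: projection.
Qed.

(* Upper bound: the second moment of hs about alpha is (alpha/n)^2 E[negpart^2]. *)
Lemma residual_hs_le (c : cube n -> R) (alpha : R) : (0 < n)%N -> 0 < alpha ->
  residual c (hs n alpha) <= 1 / 2 * (alpha ^+ 2 / n%:R).
Proof.
move=> n_gt0 alpha_gt0; have n_neq0 : n%:R != 0 :> R by rewrite pnatr_eq0 -lt0n.
apply: le_trans (residual_le _ _ alpha) _.
rewrite (eq_expect (g := fun x => (alpha / n%:R) ^+ 2 * negpart x ^+ 2)); last first.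
  by move=> x; rewrite hs_negpart //; ring.
rewrite expectZ expect_negpart_sq.
by have -> : (alpha / n%:R) ^+ 2 * (n%:R / 2) = 1 / 2 * (alpha ^+ 2 / n%:R) by field.
Qed.

End HalfSlope.

Theorem mainTheorem20 (R : realFieldType) :
  exists c C : R, 0 < c /\ c < C /\
    forall (n : nat) (alpha : R), odd n -> (3 <= n)%N -> 0 < alpha ->
      c * (alpha ^+ 2 / n%:R) <=
        norm2sq (hs n alpha) - fhat (hs n alpha) set0 ^+ 2 - fhat (hs n alpha) setT ^+ 2
      /\
      norm2sq (hs n alpha) - fhat (hs n alpha) set0 ^+ 2 - fhat (hs n alpha) setT ^+ 2
        <= C * (alpha ^+ 2 / n%:R).
Proof.
exists (1 / 4), 1; split; first by rewrite mul1r invr_gt0 ltr0n.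
split; first by rewrite ltr_pdivrMr // mul1r ltr1n.
move=> n alpha _ n_ge3 alpha_gt0; have n_gt1 : (1 < n)%N by apply: leq_trans n_ge3.
rewrite outer_weight_residual; split; first exact: residual_hs_ge.
apply: le_trans (residual_hs_le _ (ltnW n_gt1) alpha_gt0) _.
by rewrite ler_wpM2r ?divr_ge0 ?sqr_ge0 ?ler0n // ler_pdivrMr // mul1r ler1n.
Qed.
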